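(* Let $\mathcal Y=(Y_n)$ be an increasing sequence of finite subsets of $\Gamma$ with union $\Gamma$, let $(v_n)$ be an inflating sequence for $\mathcal Y$, and let $\mathbf A=(A_n)\in\mathcal S_{\mathcal Y}({\sf BDO}(\Gamma))$. Then the operator $\mathrm{Op}(\mathbf A)=\sum_{n=1}^\infty R_{v_n}A_nP_{Y_n}R_{v_n}^{-1}$ (a strongly convergent series) is band-dominated, i.e. belongs to ${\sf BDO}(\Gamma)$.
   Context: $\Gamma$ is a countable discrete group. For $X\subseteq\Gamma$, $P_X$ is the orthogonal projection of $l^2(\Gamma)$ onto $l^2(X)$. For $r\in\Gamma$, $(L_ru)(t)=u(r^{-1}t)$ and $(R_ru)(t)=u(tr)$ on $l^2(\Gamma)$. ${\sf BDO}(\Gamma)$ is the smallest closed subalgebra of $L(l^2(\Gamma))$ containing all $L_r$ and all multiplication operators $aI$, $a\in l^\infty(\Gamma)$. $\mathcal F_{\mathcal Y}$ is the $C^*$-algebra of bounded sequences $(A_n)$ of operators $A_n$ on $\mathrm{im}\,P_{Y_n}$ (componentwise operations, supremum norm); $\mathcal S_{\mathcal Y}({\sf BDO}(\Gamma))$ is its smallest closed $C^*$-subalgebra containing all $(P_{Y_n}AP_{Y_n})$, $A\in{\sf BDO}(\Gamma)$. A sequence $(v_n)$ in $\Gamma$ is inflating for a sequence of sets $(Z_n)$ if $Z_mv_m^{-1}\cap Z_nv_n^{-1}=\emptyset$ for $m\ne n$ (here $Zv^{-1}=\{zv^{-1}:z\in Z\}$). For every $(A_n)\in\mathcal F_{\mathcal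 Y}$ the series defining $\mathrm{Op}$ converges strongly. *)

From Stdlib Require Import Reals List Classical ClassicalEpsilon FunctionalExtensionality.
Open Scope R_scope.

Record C := mkC { re : R; im : R }.
Definition C0 : C := mkC 0 0.
Definition Cadd (a b : C) : C := mkC (re a + re b) (im a + im b).
Definition Copp (a : C) : C := mkC (- re a) (- im a).
Definition Cmul (a b : C) : C :=
  mkC (re a * re b - im a * im b) (re a * im b + im a * re b).
Definition Cconj (a : C) : C := mkC (re a) (- im a).
Definition Cnorm2 (a : C) : R := re a * re a + im a * im a.

Record Group := {
  carrier :> Type;
  gmul : carrier -> carrier -> carrier;
  ginv : carrier -> carrier;
  gone : carrier;
  gmul_assoc : forall x y z, gmul x (gmul y z) = gmul (gmul x y) z;
  gmul_1l : forall x, gmul gone x = x;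
  gmul_Vl : forall x, gmul (ginv x) x = gone;
  g_countable : exists f : carrier -> nat, forall x y, f x = f y -> x = y
}.

Section L2.
Variable G : Group.

Definition Vec := G -> C.
Definition vadd (u v : Vec) : Vec := fun t => Cadd (u t) (v t).
Definition vscale (a : C) (u : Vec) : Vec := fun t => Cmul a (u t).
Definition vsub (u v : Vec) : Vec := fun t => Cadd (u t) (Copp (v t)).

Definition sumsq (u : Vec) (l : list G) : R :=
  fold_right (fun t acc => Cnorm2 (u t) + acc) 0 l.

Definition in_l2 (u : Vec) : Prop :=
  exists M, forall l, NoDup l -> sumsq u l <= M.

(** ||u||_2 <= |c| *)
Definition norm_le (u : Vec) (c : R) : Prop :=
  forall l, NoDup l -> sumsq u l <= c * c.

(** operators; only their action on l^2(Gamma) matters *)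
Definition Op := Vec -> Vec.

Definition bounded (A : Op) : Prop :=
  (forall u v a, in_l2 u -> in_l2 v ->
     A (vadd u (vscale a v)) = vadd (A u) (vscale a (A v))) /\
  (forall u, in_l2 u -> in_l2 (A u)) /\
  (exists c, forall u r, in_l2 u -> norm_le u r -> norm_le (A u) (c * r)).

Definition op_eq (A B : Op) : Prop := forall u, in_l2 u -> A u = B u.

Definition op_dist_le (A B : Op) (eps : R) : Prop :=
  forall u r, in_l2 u -> norm_le u r -> norm_le (vsub (A u) (B u)) (eps * r).

Definition Lsh (r : G) : Op := fun u t => u (gmul G (ginv G r) t).
Definition Rsh (r : G) : Op := fun u t => u (gmul G t r).
Definition Mult (a : G -> C) : Op := fun u t => Cmul (a t) (u t).
Definition bounded_fun (a : G -> C) : Prop := exists M, forall t, Cnorm2 (a t) <= M.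

Definition closed_subalg (S : Op -> Prop) : Prop :=
  (forall A, S A -> bounded A) /\
  (forall A B, S A -> S B -> S (fun u => vadd (A u) (B u))) /\
  (forall a A, S A -> S (fun u => vscale a (A u))) /\
  (forall A B, S A -> S B -> S (fun u => A (B u))) /\
  (forall A B, S A -> op_eq A B -> S B) /\
  (forall A, bounded A ->
     (forall eps, eps > 0 -> exists B, S B /\ op_dist_le A B eps) -> S A).

Definition BDO (A : Op) : Prop :=
  forall S, closed_subalg S ->
    (forall r, S (Lsh r)) ->
    (forall a, bounded_fun a -> S (Mult a)) -> S A.

(** finite subsets of Gamma are represented by duplicate-free lists *)
Definition supp_in (u : Vec) (l : list G) : Prop := forall t, ~ In t l -> u t = C0.

Definition Proj (l : list G) : Op :=
  fun u t => if excluded_middle_informative (In t l) then u t else C0.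

Definition inner (u v : Vec) (l : list G) : C :=
  fold_right (fun t acc => Cadd (Cmul (u t) (Cconj (v t))) acc) C0 l.

(** a sequence (A_n); A_n is only considered on im P_{Y_n} *)
Definition SeqOp := nat -> Op.

Definition in_F (Y : nat -> list G) (A : SeqOp) : Prop :=
  (forall n u, supp_in u (Y n) -> supp_in (A n u) (Y n)) /\
  (forall n u v a, supp_in u (Y n) -> supp_in v (Y n) ->
     A n (vadd u (vscale a v)) = vadd (A n u) (vscale a (A n v))) /\
  (exists M, forall n u, supp_in u (Y n) ->
     sumsq (A n u) (Y n) <= M * sumsq u (Y n)).

Definition seq_eq (Y : nat -> list G) (A B : SeqOp) : Prop :=
  forall n u, supp_in u (Y n) -> A n u = B n u.

Definition seq_dist_le (Y : nat -> list G) (A B : SeqOp) (eps : R) : Prop :=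
  forall n u, supp_in u (Y n) ->
    sumsq (vsub (A n u) (B n u)) (Y n) <= eps * eps * sumsq u (Y n).

Definition is_adj (Y : nat -> list G) (A A' : SeqOp) : Prop :=
  forall n u v, supp_in u (Y n) -> supp_in v (Y n) ->
    inner (A n u) v (Y n) = inner u (A' n v) (Y n).

Definition cstar_subalg (Y : nat -> list G) (S : SeqOp -> Prop) : Prop :=
  (forall A, S A -> in_F Y A) /\
  (forall A B, S A -> S B -> S (fun n u => vadd (A n u) (B n u))) /\
  (forall a A, S A -> S (fun n u => vscale a (A n u))) /\
  (forall A B, S A -> S B -> S (fun n u => A n (B n u))) /\
  (forall A A', S A -> in_F Y A' -> is_adj Y A A' -> S A') /\
  (forall A B, S A -> seq_eq Y A B -> S B) /\
  (forall A, in_F Y A ->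
     (forall eps, eps > 0 -> exists B, S B /\ seq_dist_le Y A B eps) -> S A).

Definition S_Y_BDO (Y : nat -> list G) (A : SeqOp) : Prop :=
  forall S, cstar_subalg Y S ->
    (forall B, BDO B -> S (fun n u => Proj (Y n) (B (Proj (Y n) u)))) -> S A.

Definition inflating (v : nat -> G) (Z : nat -> list G) : Prop :=
  forall m n, m <> n -> forall z1 z2, In z1 (Z m) -> In z2 (Z n) ->
    gmul G z1 (ginv G (v m)) <> gmul G z2 (ginv G (v n)).

(** n-th term R_{v_n} A_n P_{Y_n} R_{v_n}^{-1}; R_{v}^{-1} = R_{v^{-1}} *)
Definition Op_term (Y : nat -> list G) (v : nat -> G) (A : SeqOp) (n : nat) : Op :=
  fun u => Rsh (v n) (A n (Proj (Y n) (Rsh (ginv G (v n)) u))).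

Fixpoint psum (T : nat -> Op) (m : nat) : Op :=
  match m with
  | O => fun _ _ => C0
  | S k => fun u => vadd (psum T k u) (T k u)
  end.

Definition strong_sum (T : nat -> Op) (B : Op) : Prop :=
  forall u, in_l2 u -> forall eps, eps > 0 ->
    exists N, forall m, (N <= m)%nat -> norm_le (vsub (B u) (psum T m u)) eps.

End L2.

(* Since the translated blocks Y_n v_n^{-1} are pairwise disjoint, Op(A) acts on the block
   Y_n v_n^{-1} as the conjugate of A_n by the right shift R_{v_n}. Hence A |-> Op(A) is a
   bounded *-homomorphism from F_Y into L(l^2(Gamma)), and the
   series converges strongly because the mass of an l^2 vector on far-away blocks is small.
   Fix a closed subalgebra S of L(l^2(Gamma)) containing every L_r and every aI. The sequences
   A in F_Y such that Op(A) and Op(A^* ) lie in S form a closed C*-subalgebra of F_Y. It contains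
   P_Y (a L_r) P_Y, because Op of it is again of the form b L_r; by linearity and closedness it
   contains P_Y B P_Y for every B in the norm closure of the finite sums of operators a L_r.
   That closure is a closed subalgebra containing the generators of BDO(Gamma), so it contains
   BDO(Gamma), and therefore S_Y(BDO(Gamma)) is mapped into S by Op. *)

From Pilot Require Import Defs.
From Stdlib Require Import Reals List Lra Lia Classical ClassicalEpsilon
  FunctionalExtensionality Permutation FinFun.
Open Scope R_scope.

Lemma C_ext (a b : Defs.C) : re a = re b -> im a = im b -> a = b.
Proof. destruct a, b; simpl; intros; subst; reflexivity. Qed.

Ltac Csolve := apply C_ext; simpl; ring.
Ltac vec_ext := apply functional_extensionality; intro.

Definition Cone : Defs.C := mkC 1 0.

Lemma Cnorm2_ge0 a : 0 <= Cnorm2 a.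
Proof. unfold Cnorm2; nra. Qed.

Lemma Cnorm2_mul a b : Cnorm2 (Cmul a b) = Cnorm2 a * Cnorm2 b.
Proof. destruct a, b; unfold Cnorm2; simpl; ring. Qed.

Lemma Cnorm2_conj a : Cnorm2 (Cconj a) = Cnorm2 a.
Proof. destruct a; unfold Cnorm2; simpl; ring. Qed.

Lemma Cnorm2_C0 : Cnorm2 C0 = 0.
Proof. unfold Cnorm2; simpl; ring. Qed.

Lemma Cnorm2_add_le a b : Cnorm2 (Cadd a b) <= 2 * Cnorm2 a + 2 * Cnorm2 b.
Proof.
  destruct a as [x1 y1], b as [x2 y2]; unfold Cnorm2; simpl.
  pose proof (Rle_0_sqr (x1 - x2)); pose proof (Rle_0_sqr (y1 - y2)); unfold Rsqr in *; nra.
Qed.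

Lemma Cnorm2_opp a : Cnorm2 (Copp a) = Cnorm2 a.
Proof. destruct a; unfold Cnorm2; simpl; ring. Qed.

Lemma Cconj_inj a b : Cconj a = Cconj b -> a = b.
Proof. intros H; apply C_ext; [apply (f_equal re) in H|apply (f_equal im) in H]; simpl in H; lra. Qed.

Section GroupFacts.
Variable G : Group.
Notation "x * y" := (gmul G x y).
Notation "x ^-1" := (ginv G x) (at level 2).
Notation "1" := (gone G).

Lemma gmul_Vr x : x * x^-1 = 1.
Proof.
  rewrite <- (gmul_1l G (x * x^-1)), <- (gmul_Vl G (x^-1)) at 1.
  rewrite <- gmul_assoc, (gmul_assoc G (x^-1) x (x^-1)), gmul_Vl, gmul_1l.
  apply gmul_Vl.
Qed.

Lemma gmul_1r x : x * 1 = x.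
Proof. rewrite <- (gmul_Vl G x), gmul_assoc, gmul_Vr, gmul_1l. reflexivity. Qed.

Lemma gmulK x a : x * a * a^-1 = x.
Proof. rewrite <- gmul_assoc, gmul_Vr, gmul_1r. reflexivity. Qed.

Lemma gmulKV x a : x * a^-1 * a = x.
Proof. rewrite <- gmul_assoc, gmul_Vl, gmul_1r. reflexivity. Qed.

Lemma gmulKg a x : a^-1 * (a * x) = x.
Proof. rewrite gmul_assoc, gmul_Vl, gmul_1l. reflexivity. Qed.

Lemma gmulKVg a x : a * (a^-1 * x) = x.
Proof. rewrite gmul_assoc, gmul_Vr, gmul_1l. reflexivity. Qed.

Lemma gmulgI a : Injective (gmul G a).
Proof. intros x y H. rewrite <- (gmulKg a x), <- (gmulKg a y), H. reflexivity. Qed.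

Lemma gmulIg a : Injective (fun x => x * a).
Proof. intros x y H. rewrite <- (gmulK x a), <- (gmulK y a). simpl in H. rewrite H. reflexivity. Qed.

Lemma ginvK x : (x^-1)^-1 = x.
Proof. rewrite <- (gmul_1r ((x^-1)^-1)), <- (gmul_Vl G x), gmul_assoc, gmul_Vl, gmul_1l. reflexivity. Qed.

Lemma ginvM a b : (a * b)^-1 = b^-1 * a^-1.
Proof.
  apply (gmulgI (a * b)). rewrite gmul_Vr, gmul_assoc, gmulK, gmul_Vr. reflexivity.
Qed.

Lemma ginv1 : 1^-1 = 1.
Proof. rewrite <- (gmul_1l G (1^-1)). apply gmul_Vr. Qed.

End GroupFacts.

Section FiniteSums.
Context {G : Group}.
Implicit Types (u w : Vec G) (l : list G).

Lemma sumsq_ge0 u l : 0 <= sumsq G u l.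
Proof. induction l; simpl; [lra|]. pose proof (Cnorm2_ge0 (u a)); lra. Qed.

Lemma sumsq_app u l1 l2 : sumsq G u (l1 ++ l2) = sumsq G u l1 + sumsq G u l2.
Proof. induction l1; simpl; [lra|]. rewrite IHl1; lra. Qed.

Lemma sumsq_perm u l1 l2 : Permutation l1 l2 -> sumsq G u l1 = sumsq G u l2.
Proof. induction 1; simpl; lra. Qed.

Lemma sumsq_map u (f : G -> G) l : sumsq G u (map f l) = sumsq G (fun t => u (f t)) l.
Proof. induction l; simpl; [lra|]. rewrite IHl; lra. Qed.

Lemma eq_sumsq u w l : (forall t, In t l -> Cnorm2 (u t) = Cnorm2 (w t)) ->
  sumsq G u l = sumsq G w l.
Proof. induction l; simpl; intros H; [lra|]. rewrite H, IHl; auto. Qed.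

Lemma sumsq_eq0 u l : (forall t, In t l -> u t = C0) -> sumsq G u l = 0.
Proof. induction l; simpl; intros H; [lra|]. rewrite H, IHl, Cnorm2_C0; auto; lra. Qed.

Lemma sumsq_filter u (p : G -> bool) l :
  sumsq G u l = sumsq G u (filter p l) + sumsq G u (filter (fun x => negb (p x)) l).
Proof. induction l; simpl; [lra|]. destruct (p a); simpl; rewrite IHl; lra. Qed.

Lemma sumsq_filter_split u (p q : G -> bool) l :
  sumsq G u (filter p l) =
  sumsq G u (filter (fun x => andb (p x) (q x)) l) + sumsq G u (filter (fun x => andb (p x) (negb (q x))) l).
Proof. induction l; simpl; [lra|]. destruct (p a), (q a); simpl; rewrite IHl; lra. Qed.

Lemma sumsq_vadd_le u w l :
  sumsq G (vadd G u w) l <= 2 * sumsq G u l + 2 * sumsq G w l.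
Proof. induction l; simpl; [lra|]. pose proof (Cnorm2_add_le (u a) (w a)). unfold vadd in *. lra. Qed.

Lemma sumsq_vsub_le u w l :
  sumsq G (vsub G u w) l <= 2 * sumsq G u l + 2 * sumsq G w l.
Proof.
  rewrite (eq_sumsq w (fun t => Copp (w t))) by (intros; rewrite Cnorm2_opp; reflexivity).
  apply sumsq_vadd_le.
Qed.

Lemma sumsq_vscale a u l : sumsq G (vscale G a u) l = Cnorm2 a * sumsq G u l.
Proof. induction l; simpl; [lra|]. unfold vscale in *. rewrite IHl, Cnorm2_mul. lra. Qed.

Definition memb l (x : G) : bool :=
  if excluded_middle_informative (In x l) then true else false.

Lemma membP l x : memb l x = true <-> In x l.
Proof. unfold memb; destruct excluded_middle_informative; split; intros; congruence || tauto. Qed.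

Lemma sumsq_incl u l1 l2 : NoDup l1 -> NoDup l2 -> incl l1 l2 ->
  sumsq G u l1 <= sumsq G u l2.
Proof.
  intros N1 N2 I. rewrite (sumsq_filter u (memb l1) l2).
  pose proof (sumsq_ge0 u (filter (fun x => negb (memb l1 x)) l2)).
  enough (sumsq G u l1 = sumsq G u (filter (memb l1) l2)) by lra.
  apply sumsq_perm, NoDup_Permutation; auto using NoDup_filter.
  intros x; rewrite filter_In, membP; intuition.
Qed.

Lemma sumsq_supp_le u l L : NoDup l -> NoDup L -> supp_in G u L ->
  sumsq G u l <= sumsq G u L.
Proof.
  intros Nl NL Hs. rewrite (sumsq_filter u (memb L) l).
  rewrite (sumsq_eq0 u (filter (fun x => negb (memb L x)) l)).
  - rewrite Rplus_0_r. apply sumsq_incl; auto using NoDup_filter.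
    intros x; rewrite filter_In, membP; tauto.
  - intros t; rewrite filter_In, Bool.negb_true_iff. intros [_ H]. apply Hs.
    rewrite <- membP, H. discriminate.
Qed.

End FiniteSums.

Section L2.
Context {G : Group}.
Implicit Types (u w x y : Vec G) (A B D E : Op G).

Lemma l2_add x y : in_l2 G x -> in_l2 G y -> in_l2 G (vadd G x y).
Proof.
  intros [M1 H1] [M2 H2]. exists (2 * M1 + 2 * M2). intros l Hl.
  pose proof (sumsq_vadd_le x y l). specialize (H1 l Hl); specialize (H2 l Hl). lra.
Qed.

Lemma l2_sub x y : in_l2 G x -> in_l2 G y -> in_l2 G (vsub G x y).
Proof.
  intros [M1 H1] [M2 H2]. exists (2 * M1 + 2 * M2). intros l Hl.
  pose proof (sumsq_vsub_le x y l). specialize (H1 l Hl); specialize (H2 l Hl). lra.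
Qed.

Lemma l2_scale c x : in_l2 G x -> in_l2 G (vscale G c x).
Proof.
  intros [M H]. exists (Cnorm2 c * Rabs M). intros l Hl. rewrite sumsq_vscale.
  apply Rmult_le_compat_l; [apply Cnorm2_ge0|]. eapply Rle_trans; [apply H; auto|apply Rle_abs].
Qed.

Lemma supp_l2 u L : NoDup L -> supp_in G u L -> in_l2 G u.
Proof. intros HL Hs. exists (sumsq G u L). intros l Hl. apply sumsq_supp_le; auto. Qed.

Lemma l2_norm_le u : in_l2 G u -> exists r, norm_le G u r.
Proof.
  intros [M HM]. exists (Rabs M + 1). intros l Hl. eapply Rle_trans; [apply HM; auto|].
  pose proof (Rabs_pos M). pose proof (Rle_abs M). nra.
Qed.

Lemma supp_norm_le u L : NoDup L -> supp_in G u L -> norm_le G u (sqrt (sumsq G u L)).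
Proof. intros HL Hs l Hl. rewrite sqrt_sqrt by apply sumsq_ge0. apply sumsq_supp_le; auto. Qed.

Lemma norm_le_of_sumsq x K r : 0 <= K -> (forall l, NoDup l -> sumsq G x l <= K * (r * r)) ->
  norm_le G x ((K + 1) * r).
Proof. intros HK H l Hl. eapply Rle_trans; [apply H; auto|]. assert (0 <= r * r) by nra. nra. Qed.

Definition opbound A (K : R) : Prop :=
  0 <= K /\ forall u r, in_l2 G u -> norm_le G u r -> forall l, NoDup l ->
    sumsq G (A u) l <= K * (r * r).

Definition linear_on_l2 A : Prop :=
  forall u w a, in_l2 G u -> in_l2 G w -> A (vadd G u (vscale G a w)) = vadd G (A u) (vscale G a (A w)).

Lemma bounded_opbound A : Defs.bounded G A -> exists K, opbound A K.
Proof.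
  intros [_ [_ [c Hc]]]. exists (c * c). split; [nra|].
  intros u r Hu Hr l Hl. specialize (Hc u r Hu Hr l Hl). nra.
Qed.

Lemma opbound_bounded A K : opbound A K -> linear_on_l2 A -> Defs.bounded G A.
Proof.
  intros [HK H] HL. split; [auto|split].
  - intros u Hu. destruct (l2_norm_le u Hu) as [r Hr]. exists (K * (r * r)). auto.
  - exists (K + 1). intros u r Hu Hr. apply norm_le_of_sumsq; auto.
Qed.

Lemma bounded_l2 A x : Defs.bounded G A -> in_l2 G x -> in_l2 G (A x).
Proof. intros [_ [H _]]; auto. Qed.

Lemma bounded_sub A x y : Defs.bounded G A -> in_l2 G x -> in_l2 G y ->
  A (vsub G x y) = vsub G (A x) (A y).
Proof.
  intros [HL _] Hx Hy.
  replace (vsub G x y) with (vadd G x (vscale G (mkC (-1) 0) y))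
    by (vec_ext; unfold vsub, vadd, vscale; Csolve).
  rewrite HL by auto. vec_ext; unfold vsub, vadd, vscale; Csolve.
Qed.

Lemma bounded_add A B : Defs.bounded G A -> Defs.bounded G B ->
  Defs.bounded G (fun u => vadd G (A u) (B u)).
Proof.
  intros HA HB. destruct (bounded_opbound A HA) as [KA [HKA HA']], (bounded_opbound B HB) as [KB [HKB HB']].
  apply (opbound_bounded _ (2 * KA + 2 * KB)).
  - split; [lra|]. intros u r Hu Hr l Hl. eapply Rle_trans; [apply sumsq_vadd_le|].
    specialize (HA' u r Hu Hr l Hl); specialize (HB' u r Hu Hr l Hl). lra.
  - intros u w a Hu Hw. destruct HA as [LA _], HB as [LB _]. rewrite LA, LB by auto.
    vec_ext; unfold vadd, vscale; Csolve.
Qed.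

Lemma bounded_scale c A : Defs.bounded G A -> Defs.bounded G (fun u => vscale G c (A u)).
Proof.
  intros HA. destruct (bounded_opbound A HA) as [K [HK HA']].
  apply (opbound_bounded _ (Cnorm2 c * K)).
  - pose proof (Cnorm2_ge0 c). split; [nra|]. intros u r Hu Hr l Hl.
    rewrite sumsq_vscale, Rmult_assoc. apply Rmult_le_compat_l; auto.
  - intros u w a Hu Hw. destruct HA as [LA _]. rewrite LA by auto.
    vec_ext; unfold vadd, vscale; Csolve.
Qed.

Lemma bounded_comp A B : Defs.bounded G A -> Defs.bounded G B -> Defs.bounded G (fun u => A (B u)).
Proof.
  intros HA HB. destruct (bounded_opbound A HA) as [KA [HKA HA']], (bounded_opbound B HB) as [KB [HKB HB']].
  apply (opbound_bounded _ (KA * (KB + 1) * (KB + 1))).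
  - split; [apply Rmult_le_pos; [apply Rmult_le_pos|]; lra|]. intros u r Hu Hr l Hl.
    assert (Hn : norm_le G (B u) ((KB + 1) * r)) by (apply norm_le_of_sumsq; auto).
    eapply Rle_trans; [apply (HA' _ ((KB + 1) * r)); auto; apply bounded_l2; auto|]. right; ring.
  - intros u w a Hu Hw. destruct HA as [LA _], HB as [LB [IB _]]. rewrite LB, LA; auto.
Qed.

Lemma bounded_eq A B : Defs.bounded G A -> op_eq G A B -> Defs.bounded G B.
Proof.
  intros [L [I [c Hc]]] E. split; [|split].
  - intros u w a Hu Hw. rewrite <- !E; auto using l2_add, l2_scale.
  - intros u Hu; rewrite <- E; auto.
  - exists c; intros u r Hu Hr; rewrite <- E; auto.
Qed.

Lemma op_dist_refl A eps : op_dist_le G A A eps.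
Proof. intros u r _ _ l _. rewrite sumsq_eq0; [nra|]. intros t _. unfold vsub. Csolve. Qed.

Lemma op_dist_mono A B e e' : 0 <= e <= e' -> op_dist_le G A B e -> op_dist_le G A B e'.
Proof.
  intros He H u r Hu Hr l Hl. specialize (H u r Hu Hr l Hl).
  assert (0 <= r * r) by nra. assert (e * e <= e' * e') by nra.
  replace (e' * r * (e' * r)) with (e' * e' * (r * r)) by ring.
  replace (e * r * (e * r)) with (e * e * (r * r)) in H by ring.
  eapply Rle_trans; [apply H|]. apply Rmult_le_compat_r; auto.
Qed.

Lemma op_dist_trans A B D e1 e2 : 0 <= e1 -> 0 <= e2 ->
  op_dist_le G A B e1 -> op_dist_le G B D e2 -> op_dist_le G A D (2 * (e1 + e2)).
Proof.
  intros He1 He2 H1 H2 u r Hu Hr l Hl.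
  replace (vsub G (A u) (D u)) with (vadd G (vsub G (A u) (B u)) (vsub G (B u) (D u)))
    by (vec_ext; unfold vadd, vsub; Csolve).
  eapply Rle_trans; [apply sumsq_vadd_le|].
  specialize (H1 u r Hu Hr l Hl); specialize (H2 u r Hu Hr l Hl).
  assert (0 <= r * r) by nra. assert (0 <= e1 * e2 * (r * r)) by (apply Rmult_le_pos; nra).
  replace (2 * (e1 + e2) * r * (2 * (e1 + e2) * r))
    with (4 * (e1 * r * (e1 * r)) + 4 * (e2 * r * (e2 * r)) + 8 * (e1 * e2 * (r * r))) by ring.
  pose proof (sumsq_ge0 (vsub G (A u) (B u)) l). pose proof (sumsq_ge0 (vsub G (B u) (D u)) l).
  lra.
Qed.

Lemma op_dist_add A B D E e : 0 <= e -> op_dist_le G A D e -> op_dist_le G B E e ->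
  op_dist_le G (fun u => vadd G (A u) (B u)) (fun u => vadd G (D u) (E u)) (2 * e).
Proof.
  intros He H1 H2 u r Hu Hr l Hl.
  replace (vsub G (vadd G (A u) (B u)) (vadd G (D u) (E u)))
    with (vadd G (vsub G (A u) (D u)) (vsub G (B u) (E u))) by (vec_ext; unfold vadd, vsub; Csolve).
  eapply Rle_trans; [apply sumsq_vadd_le|].
  specialize (H1 u r Hu Hr l Hl); specialize (H2 u r Hu Hr l Hl).
  replace (2 * e * r * (2 * e * r)) with (4 * (e * r * (e * r))) by ring. lra.
Qed.

Lemma op_dist_scale c A D e : 0 <= e -> op_dist_le G A D e ->
  op_dist_le G (fun u => vscale G c (A u)) (fun u => vscale G c (D u)) ((Cnorm2 c + 1) * e).
Proof.
  intros He H u r Hu Hr l Hl.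
  replace (vsub G (vscale G c (A u)) (vscale G c (D u))) with (vscale G c (vsub G (A u) (D u)))
    by (vec_ext; unfold vscale, vsub; Csolve).
  rewrite sumsq_vscale. specialize (H u r Hu Hr l Hl).
  pose proof (Cnorm2_ge0 c). assert (0 <= e * r * (e * r)) by nra.
  apply Rle_trans with (Cnorm2 c * (e * r * (e * r))); [apply Rmult_le_compat_l; auto|nra].
Qed.

(* ||AB - DE|| <= ||A|| ||B - E|| + ||A - D|| ||E||, with ||E|| <= ||B|| + 1 since d <= 1. *)
Lemma op_dist_comp A B D E KA KB d : Defs.bounded G A -> Defs.bounded G B -> Defs.bounded G E ->
  opbound A KA -> opbound B KB -> 0 <= d <= 1 ->
  op_dist_le G A D d -> op_dist_le G B E d ->
  op_dist_le G (fun u => A (B u)) (fun u => D (E u)) (d * (2 * KA + 2 * (2 * KB + 3) * (2 * KB + 3) + 1)).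
Proof.
  intros HA HB HE [HKA HA'] [HKB HB'] Hd HAD HBE u r Hu Hr l Hl.
  assert (HBEu : norm_le G (vsub G (B u) (E u)) (d * r)) by (intros l' Hl'; apply HBE; auto).
  assert (HEu : norm_le G (E u) ((2 * KB + 2 + 1) * r)).
  { apply norm_le_of_sumsq; [lra|]. intros l' Hl'.
    replace (E u) with (vsub G (B u) (vsub G (B u) (E u))) by (vec_ext; unfold vsub; Csolve).
    eapply Rle_trans; [apply sumsq_vsub_le|].
    specialize (HB' u r Hu Hr l' Hl'). specialize (HBEu l' Hl').
    assert (d * r * (d * r) <= r * r).
    { replace (d * r * (d * r)) with (d * d * (r * r)) by ring.
      rewrite <- (Rmult_1_l (r * r)) at 2. apply Rmult_le_compat_r; nra. }
    lra. }
  replace (vsub G (A (B u)) (D (E u)))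
    with (vadd G (A (vsub G (B u) (E u))) (vsub G (A (E u)) (D (E u)))).
  - eapply Rle_trans; [apply sumsq_vadd_le|].
    assert (H1 : sumsq G (A (vsub G (B u) (E u))) l <= KA * (d * r * (d * r)))
      by (apply HA'; auto using l2_sub, bounded_l2).
    assert (H2 : sumsq G (vsub G (A (E u)) (D (E u))) l
                 <= d * ((2 * KB + 2 + 1) * r) * (d * ((2 * KB + 2 + 1) * r)))
      by (apply HAD; auto using bounded_l2).
    set (Q := 2 * KA + 2 * (2 * KB + 3) * (2 * KB + 3) + 1).
    assert (1 <= Q) by (unfold Q; nra).
    assert (0 <= d * d * (r * r)) by nra.
    apply Rle_trans with (d * d * (r * r) * Q); [unfold Q; nra|].
    replace (d * Q * r * (d * Q * r)) with (d * d * (r * r) * (Q * Q)) by ring. nra.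
  - rewrite (bounded_sub A (B u) (E u) HA (bounded_l2 B u HB Hu) (bounded_l2 E u HE Hu)).
    vec_ext; unfold vadd, vsub; Csolve.
Qed.

End L2.

Section BandOperators.
Variable G : Group.
Notation "x ** y" := (gmul G x y) (at level 40, left associativity).
Notation "x ^-1" := (ginv G x) (at level 2).
Implicit Types (u w : Vec G) (A B D E : Op G) (a b : G -> Defs.C) (r s : G).

Definition mul_shift (a : G -> Defs.C) (r : G) : Op G := fun u t => Cmul (a t) (u (r^-1 ** t)).

Inductive band : Op G -> Prop :=
| band_mul_shift a r : bounded_fun G a -> band (mul_shift a r)
| band_add D E : band D -> band E -> band (fun u => vadd G (D u) (E u)).

Lemma bounded_fun_ge0 (a : G -> Defs.C) M : (forall t, Cnorm2 (a t) <= M) -> 0 <= M.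
Proof. intros H. eapply Rle_trans; [apply (Cnorm2_ge0 (a (gone G)))|apply H]. Qed.

Lemma mul_shift_add a r u w : mul_shift a r (vadd G u w) = vadd G (mul_shift a r u) (mul_shift a r w).
Proof. vec_ext; unfold mul_shift, vadd; Csolve. Qed.

Lemma mul_shift_comp a b r s :
  (fun u => mul_shift a r (mul_shift b s u)) = mul_shift (fun t => Cmul (a t) (b (r^-1 ** t))) (r ** s).
Proof.
  vec_ext; vec_ext. unfold mul_shift. rewrite ginvM, <- gmul_assoc. Csolve.
Qed.

Lemma band_comp D E : band D -> band E -> band (fun u => D (E u)).
Proof.
  intros HD. induction HD as [a r [Ma HMa]|D1 D2 _ IH1 _ IH2]; intros HE.
  - induction HE as [b s [Mb HMb]|E1 E2 _ IH1 _ IH2].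
    + rewrite mul_shift_comp. constructor. exists (Ma * Mb). intros t.
      rewrite Cnorm2_mul. apply Rmult_le_compat; auto using Cnorm2_ge0.
    + replace (fun u => mul_shift a r (vadd G (E1 u) (E2 u)))
        with (fun u => vadd G (mul_shift a r (E1 u)) (mul_shift a r (E2 u)))
        by (vec_ext; symmetry; apply mul_shift_add).
      constructor; auto.
  - exact (band_add _ _ (IH1 HE) (IH2 HE)).
Qed.

Lemma band_scale c D : band D -> band (fun u => vscale G c (D u)).
Proof.
  induction 1 as [a r [M HM]|D E _ IH1 _ IH2].
  - replace (fun u => vscale G c (mul_shift a r u)) with (mul_shift (fun t => Cmul c (a t)) r)
      by (vec_ext; vec_ext; unfold mul_shift, vscale; Csolve).
    constructor. exists (Cnorm2 c * M). intros t. rewrite Cnorm2_mul.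
    apply Rmult_le_compat_l; auto using Cnorm2_ge0.
  - replace (fun u => vscale G c (vadd G (D u) (E u)))
      with (fun u => vadd G (vscale G c (D u)) (vscale G c (E u)))
      by (vec_ext; vec_ext; unfold vadd, vscale; Csolve).
    constructor; auto.
Qed.

Lemma mul_shift_bounded a r : bounded_fun G a -> Defs.bounded G (mul_shift a r).
Proof.
  intros [M HM]. pose proof (bounded_fun_ge0 a M HM).
  apply (opbound_bounded _ M).
  - split; auto. intros u s Hu Hs l Hl.
    apply Rle_trans with (M * sumsq G u (map (fun t => r^-1 ** t) l)).
    + rewrite sumsq_map. induction l as [|t l IH]; simpl; [lra|].
      inversion Hl; subst. unfold mul_shift at 1. rewrite Cnorm2_mul.
      pose proof (Rmult_le_compat_r _ _ _ (Cnorm2_ge0 (u (r^-1 ** t))) (HM t)). specialize (IH H3). lra.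
    + apply Rmult_le_compat_l; auto. apply Hs, Injective_map_NoDup; auto. apply gmulgI.
  - intros u w c _ _. vec_ext. unfold mul_shift, vadd, vscale. Csolve.
Qed.

Lemma band_bounded D : band D -> Defs.bounded G D.
Proof. induction 1; auto using mul_shift_bounded, bounded_add. Qed.

Definition band_closure B : Prop :=
  Defs.bounded G B /\ forall eps, eps > 0 -> exists D, band D /\ op_dist_le G B D eps.

Lemma band_closure_add A B : band_closure A -> band_closure B ->
  band_closure (fun u => vadd G (A u) (B u)).
Proof.
  intros [HA AA] [HB AB]. split; [apply bounded_add; auto|]. intros eps Heps.
  destruct (AA (eps / 2)) as [D [HD H1]], (AB (eps / 2)) as [E [HE H2]]; try lra.
  exists (fun u => vadd G (D u) (E u)). split; [constructor; auto|].
  apply (op_dist_mono _ _ (2 * (eps / 2))); [lra|]. apply op_dist_add; auto; lra.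
Qed.

Lemma band_closure_scale c A : band_closure A -> band_closure (fun u => vscale G c (A u)).
Proof.
  intros [HA AA]. split; [apply bounded_scale; auto|]. intros eps Heps.
  pose proof (Cnorm2_ge0 c).
  destruct (AA (eps / (Cnorm2 c + 1))) as [D [HD HAD]]; [apply Rdiv_lt_0_compat; lra|].
  exists (fun u => vscale G c (D u)). split; [apply band_scale; auto|].
  apply (op_dist_mono _ _ ((Cnorm2 c + 1) * (eps / (Cnorm2 c + 1)))).
  - split; [|right; field; lra]. apply Rmult_le_pos; [lra|]. left; apply Rdiv_lt_0_compat; lra.
  - apply op_dist_scale; auto. left; apply Rdiv_lt_0_compat; lra.
Qed.

Lemma band_closure_comp A B : band_closure A -> band_closure B -> band_closure (fun u => A (B u)).
Proof.
  intros [HA AA] [HB AB]. split; [apply bounded_comp; auto|]. intros eps Heps.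
  destruct (bounded_opbound A HA) as [KA HKA], (bounded_opbound B HB) as [KB HKB].
  pose proof (proj1 HKA). pose proof (proj1 HKB).
  set (Q := 2 * KA + 2 * (2 * KB + 3) * (2 * KB + 3) + 1).
  assert (HQ : 1 <= Q) by (unfold Q; nra).
  set (d := Rmin 1 (eps / Q)).
  assert (Hd : 0 < d <= 1) by (split; [apply Rmin_pos; [lra|apply Rdiv_lt_0_compat; lra]|apply Rmin_l]).
  assert (HdQ : d * Q <= eps).
  { apply Rle_trans with (eps / Q * Q); [apply Rmult_le_compat_r; [lra|apply Rmin_r]|right; field; lra]. }
  destruct (AA d) as [D [HD HAD]], (AB d) as [E [HE HBE]]; try lra.
  exists (fun u => D (E u)). split; [apply band_comp; auto|].
  apply (op_dist_mono _ _ (d * Q)); [split; [nra|auto]|].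
  apply op_dist_comp; auto using band_bounded; lra.
Qed.

Lemma band_closure_eq A B : band_closure A -> op_eq G A B -> band_closure B.
Proof.
  intros [HA AA] E. split; [eapply bounded_eq; eauto|]. intros eps Heps.
  destruct (AA eps Heps) as [D [HD H]]. exists D; split; auto. intros u r Hu Hr. rewrite <- E; auto.
Qed.

Lemma band_closure_limit A : Defs.bounded G A ->
  (forall eps, eps > 0 -> exists B, band_closure B /\ op_dist_le G A B eps) -> band_closure A.
Proof.
  intros HA Happ. split; auto. intros eps Heps.
  destruct (Happ (eps / 4)) as [B [[HB AB] H1]]; [lra|]. destruct (AB (eps / 4)) as [D [HD H2]]; [lra|].
  exists D; split; auto. apply (op_dist_mono _ _ (2 * (eps / 4 + eps / 4))); [lra|].
  apply (op_dist_trans _ B); auto; lra.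
Qed.

Lemma band_closure_closed_subalg : closed_subalg G band_closure.
Proof.
  split; [intros A []; auto|].
  split; [exact band_closure_add|]. split; [exact band_closure_scale|].
  split; [exact band_closure_comp|]. split; [exact band_closure_eq|]. exact band_closure_limit.
Qed.

Lemma band_in_closure D : band D -> band_closure D.
Proof.
  intros HD. split; [apply band_bounded; auto|]. intros eps _. exists D. split; auto using op_dist_refl.
Qed.

Lemma BDO_band_closure B : BDO G B -> band_closure B.
Proof.
  intros HB. apply HB; [apply band_closure_closed_subalg| |].
  - intros r. replace (Lsh G r) with (mul_shift (fun _ => Cone) r)
      by (vec_ext; vec_ext; unfold Lsh, mul_shift, Cone; Csolve).
    apply band_in_closure. constructor. exists 1. intros; unfold Cnorm2, Cone; simpl; lra.
  - intros a Ha. replace (Mult G a) with (mul_shift a (gone G))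
      by (vec_ext; vec_ext; unfold Mult, mul_shift; rewrite ginv1, gmul_1l; reflexivity).
    apply band_in_closure. constructor; auto.
Qed.

End BandOperators.

Section Projections.
Context {G : Group}.
Implicit Types (u w : Vec G) (l L : list G).

Lemma Proj_in l u t : In t l -> Proj G l u t = u t.
Proof. unfold Proj; destruct excluded_middle_informative; tauto. Qed.

Lemma Proj_out l u t : ~ In t l -> Proj G l u t = C0.
Proof. unfold Proj; destruct excluded_middle_informative; tauto. Qed.

Lemma Proj_supp l u : supp_in G (Proj G l u) l.
Proof. intros t Ht; apply Proj_out; auto. Qed.

Lemma Proj_id l u : supp_in G u l -> Proj G l u = u.
Proof.
  intros H. vec_ext. destruct (classic (In x l)); [apply Proj_in; auto|].
  rewrite Proj_out, H; auto.
Qed.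

Lemma sumsq_Proj l u : sumsq G (Proj G l u) l = sumsq G u l.
Proof. apply eq_sumsq; intros t Ht; rewrite Proj_in; auto. Qed.

Lemma Proj_linear l u w a :
  Proj G l (vadd G u (vscale G a w)) = vadd G (Proj G l u) (vscale G a (Proj G l w)).
Proof. vec_ext. unfold Proj, vadd, vscale. destruct excluded_middle_informative; auto. Csolve. Qed.

Lemma supp_in_incl u L L' : incl L L' -> supp_in G u L -> supp_in G u L'.
Proof. intros I H t Ht. apply H. intros Hin; apply Ht, I; auto. Qed.

Lemma supp_in_linear u w a L : supp_in G u L -> supp_in G w L -> supp_in G (vadd G u (vscale G a w)) L.
Proof. intros Hu Hw t Ht. unfold vadd, vscale. rewrite Hu, Hw; auto. Csolve. Qed.

End Projections.

Section InnerProduct.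
Context {G : Group}.
Implicit Types (x y w : Vec G) (l : list G).

Lemma inner_add_l x y w l : inner G (vadd G x y) w l = Cadd (inner G x w l) (inner G y w l).
Proof. induction l; simpl; [Csolve|]. rewrite IHl. unfold vadd. Csolve. Qed.

Lemma inner_scale_l x w a l : inner G (vscale G a x) w l = Cmul a (inner G x w l).
Proof. induction l; simpl; [Csolve|]. rewrite IHl. unfold vscale. Csolve. Qed.

Lemma inner_sub_l x y w l : inner G (vsub G x y) w l = Cadd (inner G x w l) (Copp (inner G y w l)).
Proof. induction l; simpl; [Csolve|]. rewrite IHl. unfold vsub. Csolve. Qed.

Lemma inner_add_r x y w l : inner G x (vadd G y w) l = Cadd (inner G x y l) (inner G x w l).
Proof. induction l; simpl; [Csolve|]. rewrite IHl. unfold vadd. Csolve. Qed.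

Lemma inner_scale_r x w a l : inner G x (vscale G a w) l = Cmul (Cconj a) (inner G x w l).
Proof. induction l; simpl; [Csolve|]. rewrite IHl. unfold vscale. Csolve. Qed.

Lemma inner_sub_r x y w l : inner G x (vsub G y w) l = Cadd (inner G x y l) (Copp (inner G x w l)).
Proof. induction l; simpl; [Csolve|]. rewrite IHl. unfold vsub. Csolve. Qed.

Lemma inner_conj x y l : inner G x y l = Cconj (inner G y x l).
Proof. induction l; simpl; [Csolve|]. rewrite IHl. Csolve. Qed.

Lemma inner_self x l : re (inner G x x l) = sumsq G x l.
Proof. induction l; simpl; auto. rewrite IHl. unfold Cnorm2. ring. Qed.

Lemma re_mul_conj_le a b t : 0 < t -> re (Cmul a (Cconj b)) <= (t * Cnorm2 a + Cnorm2 b / t) / 2.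
Proof.
  intros Ht. destruct a as [p q], b as [p' q']. unfold Cnorm2; simpl.
  enough (0 <= ((t * p - p') * (t * p - p') + (t * q - q') * (t * q - q')) / (2 * t)).
  { replace ((t * (p * p + q * q) + (p' * p' + q' * q') / t) / 2)
      with ((p * p' + q * q') + ((t * p - p') * (t * p - p') + (t * q - q') * (t * q - q')) / (2 * t))
      by (field; lra). lra. }
  apply Rmult_le_pos; [apply Rplus_le_le_0_compat; apply Rle_0_sqr|]. left; apply Rinv_0_lt_compat; lra.
Qed.

Lemma re_inner_le x y l t : 0 < t -> re (inner G x y l) <= (t * sumsq G x l + sumsq G y l / t) / 2.
Proof.
  intros Ht. induction l as [|s l IH]; simpl; [unfold Rdiv; lra|].
  pose proof (re_mul_conj_le (x s) (y s) t Ht) as Hs; simpl in Hs.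
  replace ((t * (Cnorm2 (x s) + sumsq G x l) + (Cnorm2 (y s) + sumsq G y l) / t) / 2)
    with ((t * Cnorm2 (x s) + Cnorm2 (y s) / t) / 2 + (t * sumsq G x l + sumsq G y l / t) / 2)
    by (field; lra).
  lra.
Qed.

Definition unit_vec (t : G) : Vec G := fun s => if excluded_middle_informative (s = t) then Cone else C0.

Lemma inner_eq0 x y l : (forall s, In s l -> x s = C0) -> inner G x y l = C0.
Proof. induction l; simpl; intros H; [auto|]. rewrite H, IHl; auto. Csolve. Qed.

Lemma inner_single x y p l : NoDup l -> In p l -> (forall s, In s l -> s <> p -> x s = C0) ->
  inner G x y l = Cmul (x p) (Cconj (y p)).
Proof.
  induction 1 as [|s l Hs Hl IH]; simpl; intros Hin H0; [tauto|].
  destruct Hin as [->|Hin].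
  - rewrite inner_eq0; [Csolve|]. intros s' Hs'. apply H0; [right; auto|]. intros ->; contradiction.
  - rewrite IH, (H0 s); auto; [Csolve|]. intros ->; contradiction.
Qed.

Lemma inner_unit_vec t x l : NoDup l -> In t l -> inner G (unit_vec t) x l = Cconj (x t).
Proof.
  intros Hl Ht. rewrite (inner_single _ _ t); auto.
  - unfold unit_vec. destruct excluded_middle_informative; [|congruence]. unfold Cone. Csolve.
  - intros s _ Hs. unfold unit_vec. destruct excluded_middle_informative; congruence.
Qed.

Lemma unit_vec_supp t l : In t l -> supp_in G (unit_vec t) l.
Proof. intros Ht s Hs. unfold unit_vec. destruct excluded_middle_informative; subst; tauto. Qed.

End InnerProduct.

Section SequenceAlgebra.
Variable G : Group.
Variable Y : nat -> list G.
Hypothesis hY_nodup : forall n, NoDup (Y n).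
Implicit Types (A B C D : SeqOp G) (u w : Vec G).

Definition seq_supp A : Prop := forall n u, supp_in G u (Y n) -> supp_in G (A n u) (Y n).

Definition seq_linear A : Prop := forall n u w a, supp_in G u (Y n) -> supp_in G w (Y n) ->
  A n (vadd G u (vscale G a w)) = vadd G (A n u) (vscale G a (A n w)).

Definition seq_bound A (K : R) : Prop :=
  forall n u, supp_in G u (Y n) -> sumsq G (A n u) (Y n) <= K * sumsq G u (Y n).

Lemma in_F_supp A : in_F G Y A -> seq_supp A.
Proof. intros [H _]; exact H. Qed.

Lemma in_F_linear A : in_F G Y A -> seq_linear A.
Proof. intros [_ [H _]]; exact H. Qed.

Lemma in_F_bound A : in_F G Y A -> exists K, 0 < K /\ seq_bound A K.
Proof.
  intros [_ [_ [M HM]]]. exists (Rabs M + 1). split; [pose proof (Rabs_pos M); lra|].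
  intros n u Hu. eapply Rle_trans; [apply HM; auto|].
  pose proof (sumsq_ge0 u (Y n)). pose proof (Rle_abs M). nra.
Qed.

Definition seq_add A B : SeqOp G := fun n u => vadd G (A n u) (B n u).
Definition seq_scale a A : SeqOp G := fun n u => vscale G a (A n u).
Definition seq_sub A B : SeqOp G := fun n u => vsub G (A n u) (B n u).
Definition seq_comp A B : SeqOp G := fun n u => A n (B n u).

Lemma in_F_add A B : in_F G Y A -> in_F G Y B -> in_F G Y (seq_add A B).
Proof.
  intros HA HB. destruct (in_F_bound A HA) as [K1 [_ H1]], (in_F_bound B HB) as [K2 [_ H2]].
  destruct HA as [SA [LA _]], HB as [SB [LB _]]. split; [|split].
  - intros n u Hu t Ht. unfold seq_add, vadd. rewrite (SA n u Hu t Ht), (SB n u Hu t Ht). Csolve.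
  - intros n u w a Hu Hw. unfold seq_add. rewrite LA, LB by auto. vec_ext; unfold vadd, vscale; Csolve.
  - exists (2 * K1 + 2 * K2). intros n u Hu. eapply Rle_trans; [apply sumsq_vadd_le|].
    specialize (H1 n u Hu); specialize (H2 n u Hu). lra.
Qed.

Lemma in_F_scale a A : in_F G Y A -> in_F G Y (seq_scale a A).
Proof.
  intros HA. destruct (in_F_bound A HA) as [K [_ HK]]. destruct HA as [SA [LA _]]. split; [|split].
  - intros n u Hu t Ht. unfold seq_scale, vscale. rewrite (SA n u Hu t Ht). Csolve.
  - intros n u w c Hu Hw. unfold seq_scale. rewrite LA by auto. vec_ext; unfold vadd, vscale; Csolve.
  - exists (Cnorm2 a * K). intros n u Hu. unfold seq_scale. rewrite sumsq_vscale, Rmult_assoc.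
    apply Rmult_le_compat_l; [apply Cnorm2_ge0|auto].
Qed.

Lemma in_F_comp A B : in_F G Y A -> in_F G Y B -> in_F G Y (seq_comp A B).
Proof.
  intros HA HB. destruct (in_F_bound A HA) as [K1 [HK1 H1]], (in_F_bound B HB) as [K2 [_ H2]].
  destruct HA as [SA [LA _]], HB as [SB [LB _]]. split; [|split].
  - intros n u Hu. apply SA, SB; auto.
  - intros n u w a Hu Hw. unfold seq_comp. rewrite LB, LA; auto.
  - exists (K1 * K2). intros n u Hu. unfold seq_comp. rewrite Rmult_assoc.
    eapply Rle_trans; [apply H1; auto|]. apply Rmult_le_compat_l; [lra|auto].
Qed.

Lemma in_F_seq_eq A B : in_F G Y A -> seq_eq G Y A B -> in_F G Y B.
Proof.
  intros [SA [LA [M HM]]] E. split; [|split].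
  - intros n u Hu. rewrite <- E; auto.
  - intros n u w a Hu Hw. rewrite <- !E; auto using supp_in_linear.
  - exists M. intros n u Hu. rewrite <- E; auto.
Qed.

Lemma in_F_cstar_subalg : cstar_subalg G Y (in_F G Y).
Proof.
  split; [auto|]. split; [exact in_F_add|]. split; [exact in_F_scale|].
  split; [exact in_F_comp|]. split; [auto|]. split; [exact in_F_seq_eq|auto].
Qed.

Lemma seq_linear_zero A n : seq_linear A -> A n (fun _ => C0) = (fun _ => C0).
Proof.
  intros HL. assert (Hz : supp_in G (fun _ : G => C0) (Y n)) by (intros s _; reflexivity).
  pose proof (HL n _ _ (mkC (-1) 0) Hz Hz) as H.
  replace (vadd G (fun _ => C0) (vscale G (mkC (-1) 0) (fun _ => C0))) with (fun _ : G => C0) in H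
    by (vec_ext; unfold vadd, vscale; Csolve).
  vec_ext. apply (f_equal (fun f => f x)) in H. unfold vadd, vscale in H.
  apply C_ext; [apply (f_equal re) in H|apply (f_equal im) in H]; simpl in H |- *; lra.
Qed.

(* The matrix of [A n] in the basis of unit vectors, conjugate-transposed. *)
Definition seq_adj A : SeqOp G := fun n w t =>
  if excluded_middle_informative (In t (Y n)) then Cconj (inner G (A n (unit_vec t)) w (Y n)) else C0.

Definition inner_expansion A n u w (L : list G) : Defs.C :=
  fold_right (fun t acc => Cadd (Cmul (u t) (inner G (A n (unit_vec t)) w (Y n))) acc) C0 L.

Lemma inner_Proj_expansion A n u w L : seq_linear A -> NoDup L -> incl L (Y n) ->
  inner G (A n (Proj G L u)) w (Y n) = inner_expansion A n u w L.
Proof.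
  intros HL. induction 1 as [|x L Hx HN IH]; intros I; simpl.
  - replace (Proj G nil u) with (fun _ : G => C0) by (vec_ext; rewrite Proj_out; simpl; tauto).
    rewrite seq_linear_zero by auto. apply inner_eq0; auto.
  - assert (E : Proj G (x :: L) u = vadd G (Proj G L u) (vscale G (u x) (unit_vec x))).
    { vec_ext. rename x0 into s. unfold vadd, vscale, unit_vec.
      destruct (excluded_middle_informative (s = x)) as [->|Hs].
      - rewrite Proj_in by (left; auto). rewrite Proj_out by auto. unfold Cone; Csolve.
      - destruct (classic (In s L)) as [Hi|Hi].
        + rewrite !Proj_in by (try right; auto). Csolve.
        + rewrite !Proj_out; [Csolve|auto|]. simpl; intros [->|?]; auto. }
    assert (IL : incl L (Y n)) by (intros t Ht; apply I; right; auto).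
    rewrite E, HL.
    + rewrite inner_add_l, inner_scale_l, IH by auto. Csolve.
    + apply (supp_in_incl _ L); auto using Proj_supp.
    + apply unit_vec_supp, I; left; auto.
Qed.

Lemma inner_seq_adj_expansion A n u w L : incl L (Y n) ->
  inner G u (seq_adj A n w) L = inner_expansion A n u w L.
Proof.
  induction L as [|x L IH]; simpl; intros I; auto.
  rewrite IH by (intros t Ht; apply I; right; auto).
  unfold seq_adj. destruct excluded_middle_informative as [_|Hn]; [|exfalso; apply Hn, I; left; auto].
  destruct (inner G (A n (unit_vec x)) w (Y n)). Csolve.
Qed.

Lemma seq_adj_correct A : seq_linear A -> is_adj G Y A (seq_adj A).
Proof.
  intros HL n u w Hu Hw. rewrite <- (Proj_id _ u Hu) at 1.
  rewrite inner_Proj_expansion, inner_seq_adj_expansion; auto using incl_refl.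
Qed.

Lemma seq_adj_supp A : seq_supp (seq_adj A).
Proof. intros n w _ t Ht. unfold seq_adj. destruct excluded_middle_informative; tauto. Qed.

Lemma is_adj_unique A C D : seq_supp C -> seq_supp D -> is_adj G Y A C -> is_adj G Y A D ->
  seq_eq G Y C D.
Proof.
  intros HC HD AC AD n w Hw. vec_ext. rename x into t.
  destruct (classic (In t (Y n))) as [Ht|Ht].
  - apply Cconj_inj. rewrite <- !(inner_unit_vec t _ (Y n) (hY_nodup n) Ht).
    rewrite <- AC, <- AD; auto using unit_vec_supp.
  - rewrite (HC n w Hw t Ht), (HD n w Hw t Ht). reflexivity.
Qed.

Lemma is_adj_sym A C : is_adj G Y A C -> is_adj G Y C A.
Proof. intros H n u w Hu Hw. rewrite inner_conj, <- H, <- inner_conj; auto. Qed.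

(* From ||z||^2 = <A z, w> <= (||A z||^2 / K + K ||w||^2) / 2 with z = C w. *)
Lemma is_adj_bound A C K : seq_supp C -> is_adj G Y A C -> 0 < K -> seq_bound A K -> seq_bound C K.
Proof.
  intros HC Ha HK HA n w Hw. set (z := C n w).
  assert (Hz : supp_in G z (Y n)) by (apply HC; auto).
  pose proof (re_inner_le (A n z) w (Y n) (/ K) ltac:(apply Rinv_0_lt_compat; lra)) as H.
  rewrite (Ha n z w Hz Hw), inner_self in H. specialize (HA n z Hz).
  replace (sumsq G w (Y n) / / K) with (K * sumsq G w (Y n)) in H by (field; lra).
  assert (/ K * sumsq G (A n z) (Y n) <= sumsq G z (Y n)).
  { apply Rmult_le_compat_l with (r := / K) in HA; [|left; apply Rinv_0_lt_compat; lra].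
    replace (/ K * (K * sumsq G z (Y n))) with (sumsq G z (Y n)) in HA by (field; lra). auto. }
  unfold z in *. lra.
Qed.

Lemma in_F_seq_adj A : in_F G Y A -> in_F G Y (seq_adj A).
Proof.
  intros HF. destruct (in_F_bound A HF) as [K [HK HA]].
  split; [apply seq_adj_supp|split].
  - intros n u w a Hu Hw. vec_ext. rename x into t.
    change (seq_adj A n (vadd G u (vscale G a w)) t
            = Cadd (seq_adj A n u t) (Cmul a (seq_adj A n w t))).
    unfold seq_adj. destruct excluded_middle_informative; [|Csolve].
    rewrite inner_add_r, inner_scale_r. destruct a. Csolve.
  - exists K. apply (is_adj_bound A); auto using seq_adj_supp, seq_adj_correct, in_F_linear.
Qed.

Lemma is_adj_add A B C D : is_adj G Y A C -> is_adj G Y B D -> is_adj G Y (seq_add A B) (seq_add C D).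
Proof. intros H1 H2 n u w Hu Hw. unfold seq_add. rewrite inner_add_l, inner_add_r, H1, H2; auto. Qed.

Lemma is_adj_scale a A C : is_adj G Y A C -> is_adj G Y (seq_scale a A) (seq_scale (Cconj a) C).
Proof.
  intros H n u w Hu Hw. unfold seq_scale. rewrite inner_scale_l, inner_scale_r, H; auto.
  destruct a; Csolve.
Qed.

Lemma is_adj_sub A B C D : is_adj G Y A C -> is_adj G Y B D -> is_adj G Y (seq_sub A B) (seq_sub C D).
Proof. intros H1 H2 n u w Hu Hw. unfold seq_sub. rewrite inner_sub_l, inner_sub_r, H1, H2; auto. Qed.

Lemma is_adj_comp A B C D : seq_supp B -> seq_supp C -> is_adj G Y A C -> is_adj G Y B D ->
  is_adj G Y (seq_comp A B) (seq_comp D C).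
Proof. intros HB HC H1 H2 n u w Hu Hw. unfold seq_comp. rewrite H1, H2; auto. Qed.

Lemma is_adj_eq_l A B C : is_adj G Y A C -> seq_eq G Y A B -> is_adj G Y B C.
Proof. intros H E n u w Hu Hw. rewrite <- E; auto. Qed.

Lemma is_adj_eq_r A C D : is_adj G Y A C -> seq_eq G Y C D -> is_adj G Y A D.
Proof. intros H E n u w Hu Hw. rewrite <- E; auto. Qed.

Lemma seq_dist_adj A B C D eps : is_adj G Y A C -> is_adj G Y B D -> seq_supp C -> seq_supp D ->
  eps > 0 -> seq_dist_le G Y A B eps -> seq_dist_le G Y C D eps.
Proof.
  intros H1 H2 HC HD He Hd.
  apply (is_adj_bound (seq_sub A B)); [|apply is_adj_sub; auto|nra|exact Hd].
  intros n x Hx t Ht. unfold seq_sub, vsub. rewrite (HC n x Hx t Ht), (HD n x Hx t Ht). Csolve.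
Qed.

Definition compress (B : Op G) : SeqOp G := fun n u => Proj G (Y n) (B (Proj G (Y n) u)).

Lemma in_F_compress (B : Op G) : Defs.bounded G B -> in_F G Y (compress B).
Proof.
  intros HB. destruct (bounded_opbound B HB) as [K [HK HB']]. split; [|split].
  - intros n u _. apply Proj_supp.
  - intros n u w a Hu Hw. unfold compress. destruct HB as [LB _].
    rewrite Proj_linear, LB, Proj_linear; eauto using supp_l2, Proj_supp.
  - exists K. intros n u Hu. unfold compress. rewrite sumsq_Proj, (Proj_id _ u Hu).
    rewrite <- (sqrt_sqrt (sumsq G u (Y n))) by apply sumsq_ge0.
    apply HB'; eauto using supp_l2, supp_norm_le.
Qed.

Lemma compress_dist (B D : Op G) eps : op_dist_le G B D eps -> seq_dist_le G Y (compress B) (compress D) eps.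
Proof.
  intros H n u Hu. unfold compress. rewrite (Proj_id _ u Hu).
  replace (vsub G (Proj G (Y n) (B u)) (Proj G (Y n) (D u))) with (Proj G (Y n) (vsub G (B u) (D u)))
    by (vec_ext; unfold Proj, vsub; destruct excluded_middle_informative; auto; Csolve).
  rewrite sumsq_Proj. rewrite <- (sqrt_sqrt (sumsq G u (Y n))) by apply sumsq_ge0.
  eapply Rle_trans; [apply H; eauto using supp_l2, supp_norm_le|]. right; ring.
Qed.

Lemma compress_add (B D : Op G) :
  seq_eq G Y (compress (fun u => vadd G (B u) (D u))) (seq_add (compress B) (compress D)).
Proof.
  intros n u _. vec_ext. unfold compress, seq_add, Proj, vadd.
  destruct excluded_middle_informative; auto. Csolve.
Qed.

End SequenceAlgebra.

Section BlockOperator.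
Variable G : Group.
Variable Y : nat -> list G.
Variable v : nat -> G.
Hypothesis hY_nodup : forall n, NoDup (Y n).
Hypothesis hv : inflating G v Y.
Notation "x ** y" := (gmul G x y) (at level 40, left associativity).
Notation "x ^-1" := (ginv G x) (at level 2).
Implicit Types (A B C : SeqOp G) (u w : Vec G) (l : list G) (N : list nat).

(* Y_n v_n^{-1}; these blocks are pairwise disjoint by [hv]. *)
Definition block n : list G := map (fun y => y ** (v n)^-1) (Y n).

Lemma in_block n t : In t (block n) <-> In (t ** v n) (Y n).
Proof.
  unfold block; rewrite in_map_iff; split.
  - intros [y [<- H]]. rewrite gmulKV; auto.
  - intros H; exists (t ** v n); split; auto. apply gmulK.
Qed.

Lemma block_NoDup n : NoDup (block n).
Proof. apply Injective_map_NoDup; auto. apply gmulIg. Qed.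

Lemma block_index_unique t m n : In (t ** v m) (Y m) -> In (t ** v n) (Y n) -> m = n.
Proof.
  intros H1 H2. destruct (Nat.eq_dec m n) as [|Hne]; auto. exfalso.
  apply (hv m n Hne _ _ H1 H2). rewrite !gmulK. reflexivity.
Qed.

Lemma blocks_NoDup N : NoDup N -> NoDup (concat (map block N)).
Proof.
  induction 1 as [|n N Hn HN IH]; simpl; [constructor|]. apply NoDup_app; auto using block_NoDup.
  intros t H1 H2. apply in_concat in H2 as [L [HL Ht]]. apply in_map_iff in HL as [m [<- Hm]].
  apply in_block in H1, Ht. rewrite (block_index_unique t n m) in Hn; auto.
Qed.

Definition block_index (t : G) : option nat :=
  match excluded_middle_informative (exists n, In (t ** v n) (Y n)) with
  | left H => Some (proj1_sig (constructive_indefinite_description _ H))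
  | right _ => None
  end.

Lemma block_indexP t n : block_index t = Some n <-> In (t ** v n) (Y n).
Proof.
  unfold block_index; destruct excluded_middle_informative as [H|H].
  - destruct (constructive_indefinite_description _ H) as [m Hm]; simpl.
    split; [intros E; inversion E; subst; auto|]. intros Hn. f_equal. eapply block_index_unique; eauto.
  - split; [discriminate|]. intros Hn; exfalso; apply H; eauto.
Qed.

Lemma block_index_shift s n : In s (Y n) -> block_index (s ** (v n)^-1) = Some n.
Proof. intros H; apply block_indexP. rewrite gmulKV; auto. Qed.

(* The operator Op(A) = sum_n R_{v_n} A_n P_{Y_n} R_{v_n}^{-1}, defined pointwise. *)
Definition blockOp A : Op G := fun u t =>
  match block_index t with
  | Some n => A n (Proj G (Y n) (Rsh G ((v n)^-1) u)) (t ** v n)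
  | None => C0
  end.

Definition in_block_of n (t : G) : bool :=
  match block_index t with Some m => Nat.eqb m n | None => false end.

Definition in_blocks N (t : G) : bool :=
  match block_index t with Some m => existsb (Nat.eqb m) N | None => false end.

Definition block_indices l : list nat :=
  nodup Nat.eq_dec (flat_map (fun t => match block_index t with Some n => n :: nil | None => nil end) l).

Lemma in_block_indices l t n : In t l -> block_index t = Some n -> In n (block_indices l).
Proof. intros Ht E. apply nodup_In, in_flat_map. exists t; split; auto. rewrite E; left; auto. Qed.

Lemma sumsq_blockOp_block A K u l n : seq_supp G Y A -> seq_bound G Y A K -> NoDup l ->
  sumsq G (blockOp A u) (filter (in_block_of n) l) <= K * sumsq G u (block n).
Proof.
  intros HS HA Hl. set (w := Proj G (Y n) (Rsh G ((v n)^-1) u)).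
  replace (sumsq G (blockOp A u) (filter (in_block_of n) l))
    with (sumsq G (A n w) (map (fun t => t ** v n) (filter (in_block_of n) l))).
  - apply Rle_trans with (sumsq G (A n w) (Y n)).
    + apply (sumsq_supp_le _ _ _ (Injective_map_NoDup (gmulIg G (v n)) (NoDup_filter _ Hl))
        (hY_nodup n) (HS n w (Proj_supp _ _))).
    + eapply Rle_trans; [apply HA, Proj_supp|]. unfold w, block.
      rewrite sumsq_Proj, sumsq_map. right; reflexivity.
  - rewrite sumsq_map. apply eq_sumsq. intros t Ht. apply filter_In in Ht as [_ Ht].
    unfold in_block_of in Ht. unfold blockOp. destruct (block_index t) as [m|]; [|discriminate].
    apply Nat.eqb_eq in Ht; subst. reflexivity.
Qed.

Lemma sumsq_blockOp_blocks A K u l N : seq_supp G Y A -> seq_bound G Y A K -> NoDup l -> NoDup N ->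
  sumsq G (blockOp A u) (filter (in_blocks N) l) <= K * sumsq G u (concat (map block N)).
Proof.
  intros HS HA Hl HN. induction HN as [|n N Hn HN IH]; simpl.
  - rewrite (filter_ext _ (fun _ => false)), filter_false by (intros t; unfold in_blocks;
      destruct (block_index t); reflexivity). simpl; lra.
  - rewrite sumsq_app, (sumsq_filter_split _ _ (in_block_of n)).
    rewrite (filter_ext (fun t => andb (in_blocks (n :: N) t) (in_block_of n t)) (in_block_of n)),
      (filter_ext (fun t => andb (in_blocks (n :: N) t) (negb (in_block_of n t))) (in_blocks N)).
    + pose proof (sumsq_blockOp_block A K u l n HS HA Hl). lra.
    + intros t. unfold in_blocks, in_block_of. destruct (block_index t) as [m|]; auto; simpl.
      destruct (Nat.eqb_spec m n) as [->|]; simpl; [|apply Bool.andb_true_r].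
      symmetry. apply Bool.not_true_iff_false. rewrite existsb_exists.
      intros [k [Hk E]]. apply Nat.eqb_eq in E; subst; auto.
    + intros t. unfold in_blocks, in_block_of. destruct (block_index t) as [m|]; auto; simpl.
      destruct (Nat.eqb m n); simpl; [reflexivity|apply Bool.andb_false_r].
Qed.

Lemma sumsq_blockOp_le A K u l N : seq_supp G Y A -> seq_bound G Y A K -> NoDup l -> NoDup N ->
  (forall t, In t l -> in_blocks N t = false -> blockOp A u t = C0) ->
  sumsq G (blockOp A u) l <= K * sumsq G u (concat (map block N)).
Proof.
  intros HS HA Hl HN H0. rewrite (sumsq_filter _ (in_blocks N) l).
  rewrite (sumsq_eq0 _ (filter (fun x => negb (in_blocks N x)) l)).
  - rewrite Rplus_0_r. apply sumsq_blockOp_blocks; auto.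
  - intros t Ht; apply filter_In in Ht as [Ht Hb]. apply H0; auto. apply Bool.negb_true_iff; auto.
Qed.

Lemma blockOp_out_of_blocks A u l t : In t l -> in_blocks (block_indices l) t = false ->
  blockOp A u t = C0.
Proof.
  intros Ht Hr. unfold in_blocks in Hr. unfold blockOp. destruct (block_index t) as [n|] eqn:E; auto.
  exfalso. apply Bool.not_true_iff_false in Hr. apply Hr, existsb_exists.
  exists n; split; [eapply in_block_indices; eauto|apply Nat.eqb_refl].
Qed.

(* Op(A) is bounded by sup_n ||A_n||, as its blocks act on disjoint parts of Gamma. *)
Lemma sumsq_blockOp A K u l M : seq_supp G Y A -> seq_bound G Y A K -> 0 <= K -> NoDup l ->
  (forall l', NoDup l' -> sumsq G u l' <= M) -> sumsq G (blockOp A u) l <= K * M.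
Proof.
  intros HS HA HK Hl Hu. eapply Rle_trans.
  - apply (sumsq_blockOp_le A K u l (block_indices l) HS HA Hl (NoDup_nodup _ _)).
    intros t Ht; apply blockOp_out_of_blocks; auto.
  - apply Rmult_le_compat_l; auto. apply Hu, blocks_NoDup, NoDup_nodup.
Qed.

Lemma blockOp_linear A u w a : seq_linear G Y A ->
  blockOp A (vadd G u (vscale G a w)) = vadd G (blockOp A u) (vscale G a (blockOp A w)).
Proof.
  intros HA. vec_ext. rename x into t.
  change (blockOp A (vadd G u (vscale G a w)) t = Cadd (blockOp A u t) (Cmul a (blockOp A w t))).
  unfold blockOp. destruct (block_index t) as [n|]; [|Csolve].
  replace (Proj G (Y n) (Rsh G (v n)^-1 (vadd G u (vscale G a w))))
    with (Proj G (Y n) (vadd G (Rsh G (v n)^-1 u) (vscale G a (Rsh G (v n)^-1 w)))) by reflexivity.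
  rewrite Proj_linear, HA by apply Proj_supp. reflexivity.
Qed.

Lemma blockOp_bounded A : in_F G Y A -> Defs.bounded G (blockOp A).
Proof.
  intros HF. destruct (in_F_bound G Y A HF) as [K [HK HA]]. pose proof (in_F_supp G Y A HF) as HS.
  split; [|split].
  - intros u w a _ _. apply blockOp_linear, in_F_linear; auto.
  - intros u [M HM]. exists (K * M). intros l Hl. apply sumsq_blockOp; auto; lra.
  - exists (K + 1). intros u r Hu Hr. apply norm_le_of_sumsq; [lra|].
    intros l Hl. apply sumsq_blockOp; auto; lra.
Qed.

Lemma blockOp_sub A B u : vsub G (blockOp A u) (blockOp B u) = blockOp (seq_sub G A B) u.
Proof. vec_ext. unfold blockOp, vsub, seq_sub. destruct (block_index x); auto. Csolve. Qed.

Lemma blockOp_dist A B eps : seq_supp G Y A -> seq_supp G Y B -> seq_dist_le G Y A B eps ->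
  op_dist_le G (blockOp A) (blockOp B) eps.
Proof.
  intros HA HB Hd u r Hu Hr l Hl. rewrite blockOp_sub.
  replace (eps * r * (eps * r)) with (eps * eps * (r * r)) by ring.
  apply sumsq_blockOp; auto; [|nra].
  intros n x Hx t Ht. unfold seq_sub, vsub. rewrite (HA n x Hx t Ht), (HB n x Hx t Ht). Csolve.
Qed.

Lemma blockOp_add A B u : blockOp (seq_add G A B) u = vadd G (blockOp A u) (blockOp B u).
Proof. vec_ext. unfold blockOp, seq_add, vadd. destruct (block_index x); auto. Csolve. Qed.

Lemma blockOp_scale a A u : blockOp (seq_scale G a A) u = vscale G a (blockOp A u).
Proof. vec_ext. unfold blockOp, seq_scale, vscale. destruct (block_index x); auto. Csolve. Qed.

Lemma blockOp_comp A B u : seq_supp G Y B -> blockOp (seq_comp G A B) u = blockOp A (blockOp B u).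
Proof.
  intros HB. vec_ext. rename x into t. unfold blockOp at 1 2, seq_comp.
  destruct (block_index t) as [n|]; auto. f_equal.
  vec_ext. rename x into s. unfold Proj at 2, Rsh at 2.
  destruct excluded_middle_informative as [i|i].
  - unfold blockOp. rewrite block_index_shift, gmulKV; auto.
  - apply (HB n _ (Proj_supp _ _) s); auto.
Qed.

Lemma blockOp_seq_eq A B u : seq_eq G Y A B -> blockOp A u = blockOp B u.
Proof.
  intros H. vec_ext. unfold blockOp. destruct (block_index x); auto. rewrite H; auto using Proj_supp.
Qed.

Lemma Op_term_out A k u t : seq_supp G Y A -> block_index t <> Some k -> Op_term G Y v A k u t = C0.
Proof.
  intros HA Hr. apply (HA k _ (Proj_supp _ _)). intros H. apply Hr, block_indexP; auto.
Qed.

Lemma psum_Op_term A m u t : seq_supp G Y A ->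
  psum G (Op_term G Y v A) m u t =
  match block_index t with Some n => if Nat.ltb n m then blockOp A u t else C0 | None => C0 end.
Proof.
  intros HA. induction m as [|m IH]; simpl.
  - destruct (block_index t); auto.
  - unfold vadd. rewrite IH. destruct (block_index t) as [n|] eqn:E.
    + destruct (Nat.ltb_spec n m), (Nat.ltb_spec n (S m)); try lia.
      * rewrite Op_term_out by (auto; rewrite E; intros [=]; lia). Csolve.
      * replace m with n by lia. unfold blockOp, Op_term, Rsh; rewrite E. Csolve.
      * rewrite Op_term_out by (auto; rewrite E; intros [=]; lia). Csolve.
    + rewrite Op_term_out by (auto; rewrite E; discriminate). Csolve.
Qed.

Definition seq_tail A (m : nat) : SeqOp G := fun n => if Nat.ltb n m then (fun _ _ => C0) else A n.

Lemma blockOp_sub_psum A m u : seq_supp G Y A ->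
  vsub G (blockOp A u) (psum G (Op_term G Y v A) m u) = blockOp (seq_tail A m) u.
Proof.
  intros HA. vec_ext. rename x into t. unfold vsub. rewrite psum_Op_term by auto.
  unfold blockOp, seq_tail. destruct (block_index t) as [n|]; [|Csolve].
  destruct (Nat.ltb n m); Csolve.
Qed.

Lemma seq_tail_supp A m : seq_supp G Y A -> seq_supp G Y (seq_tail A m).
Proof. intros HA n u Hu. unfold seq_tail. destruct (Nat.ltb n m); auto. intros t _; auto. Qed.

Lemma seq_tail_bound A K m : seq_bound G Y A K -> 0 <= K -> seq_bound G Y (seq_tail A m) K.
Proof.
  intros HA HK n u Hu. unfold seq_tail. destruct (Nat.ltb n m); auto.
  rewrite sumsq_eq0 by auto. pose proof (sumsq_ge0 u (Y n)). nra.
Qed.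

(* A finite set carries all but [delta] of the mass of [u]; the blocks beyond its indices miss it. *)
Lemma l2_block_tail u delta : in_l2 G u -> delta > 0 ->
  exists m, forall N, NoDup N -> (forall n, In n N -> (m <= n)%nat) ->
    sumsq G u (concat (map block N)) <= delta.
Proof.
  intros [M HM] Hd.
  destruct (completeness (fun x => exists l, NoDup l /\ x = sumsq G u l)) as [s [Hub Hlub]].
  { exists M. intros x [l [Hl ->]]. apply HM; auto. }
  { exists 0, nil. split; [constructor|reflexivity]. }
  assert (Hex : exists l0, NoDup l0 /\ sumsq G u l0 > s - delta).
  { apply NNPP. intros Hn. enough (s <= s - delta) by lra. apply Hlub. intros x [l [Hl ->]].
    apply Rnot_gt_le. intros Hg. apply Hn. exists l; auto. }
  destruct Hex as [l0 [Hl0 Hs0]].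
  exists (S (fold_right max 0%nat (block_indices l0))). intros N HN Hge.
  assert (Hmax : forall k L, In k L -> (k <= fold_right max 0 L)%nat).
  { induction L as [|a L IH]; simpl; [tauto|]. intros [->|HH]; [lia|]. specialize (IH HH); lia. }
  assert (Hdis : NoDup (l0 ++ concat (map block N))).
  { apply NoDup_app; auto using blocks_NoDup.
    intros t H1 H2. apply in_concat in H2 as [L [HL Ht]]. apply in_map_iff in HL as [n [<- Hn]].
    apply in_block, block_indexP in Ht. specialize (Hge n Hn).
    pose proof (Hmax n _ (in_block_indices l0 t n H1 Ht)). lia. }
  assert (sumsq G u (l0 ++ concat (map block N)) <= s) by (apply Hub; eauto).
  rewrite sumsq_app in H. lra.
Qed.

Lemma strong_sum_blockOp A : in_F G Y A -> strong_sum G (Op_term G Y v A) (blockOp A).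
Proof.
  intros HF u Hu eps Heps. destruct (in_F_bound G Y A HF) as [K [HK HA]].
  pose proof (in_F_supp G Y A HF) as HS.
  destruct (l2_block_tail u (eps * eps / K) Hu) as [m Hm]; [apply Rdiv_lt_0_compat; nra|].
  exists m. intros m' Hm' l Hl. rewrite blockOp_sub_psum by auto.
  set (N := filter (fun n => Nat.leb m' n) (block_indices l)).
  assert (HN : NoDup N) by apply NoDup_filter, NoDup_nodup.
  eapply Rle_trans.
  - apply (sumsq_blockOp_le (seq_tail A m') K u l N);
      auto using seq_tail_supp, seq_tail_bound with real.
    intros t Ht Hr. unfold blockOp, seq_tail. destruct (block_index t) as [n|] eqn:E; auto.
    destruct (Nat.ltb_spec n m'); auto. exfalso.
    apply Bool.not_true_iff_false in Hr. apply Hr. unfold in_blocks. rewrite E.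
    apply existsb_exists. exists n. rewrite Nat.eqb_refl. split; auto.
    apply filter_In. split; [eapply in_block_indices; eauto|apply Nat.leb_le; lia].
  - assert (sumsq G u (concat (map block N)) <= eps * eps / K).
    { apply Hm; auto. intros n Hn. apply filter_In in Hn as [_ Hn]. apply Nat.leb_le in Hn; lia. }
    apply Rmult_le_compat_l with (r := K) in H; [|lra].
    replace (K * (eps * eps / K)) with (eps * eps) in H by (field; lra). lra.
Qed.

End BlockOperator.

Section Lifting.
Variable G : Group.
Variable Y : nat -> list G.
Variable v : nat -> G.
Hypothesis hY_nodup : forall n, NoDup (Y n).
Hypothesis hv : inflating G v Y.
Variable S : Op G -> Prop.
Hypothesis hS : closed_subalg G S.
Hypothesis hL : forall r, S (Lsh G r).
Hypothesis hM : forall a, bounded_fun G a -> S (Mult G a).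
Notation "x ** y" := (gmul G x y) (at level 40, left associativity).
Notation "x ^-1" := (ginv G x) (at level 2).
Notation blockOp := (blockOp G Y v).
Notation block_index := (block_index G Y v).
Implicit Types (A B C : SeqOp G).

(* Keeping an adjoint with [Op] in [S] alongside makes the class closed under adjoints,
   although [S] itself need not be. *)
Definition lifts A : Prop :=
  in_F G Y A /\ S (blockOp A) /\ exists C, in_F G Y C /\ is_adj G Y A C /\ S (blockOp C).

Lemma S_ext (T T' : Op G) : S T -> (forall u, T u = T' u) -> S T'.
Proof. intros H E. destruct hS as [_ [_ [_ [_ [Heq _]]]]]. apply (Heq T); auto. intros u _; auto. Qed.

Lemma S_add (T T' : Op G) : S T -> S T' -> S (fun u => vadd G (T u) (T' u)).
Proof. destruct hS as [_ [H _]]; apply H. Qed.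

Lemma S_scale a (T : Op G) : S T -> S (fun u => vscale G a (T u)).
Proof. destruct hS as [_ [_ [H _]]]; apply H. Qed.

Lemma S_comp (T T' : Op G) : S T -> S T' -> S (fun u => T (T' u)).
Proof. destruct hS as [_ [_ [_ [H _]]]]; apply H. Qed.

Lemma S_blockOp_add A B : S (blockOp A) -> S (blockOp B) -> S (blockOp (seq_add G A B)).
Proof. intros HA HB. apply (S_ext _ _ (S_add _ _ HA HB)). intros u. symmetry. apply blockOp_add. Qed.

Lemma S_blockOp_scale a A : S (blockOp A) -> S (blockOp (seq_scale G a A)).
Proof. intros HA. apply (S_ext _ _ (S_scale a _ HA)). intros u. symmetry. apply blockOp_scale. Qed.

Lemma S_blockOp_comp A B : seq_supp G Y B -> S (blockOp A) -> S (blockOp B) ->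
  S (blockOp (seq_comp G A B)).
Proof.
  intros HB' HA HB. apply (S_ext _ _ (S_comp _ _ HA HB)). intros u. symmetry. apply blockOp_comp; auto.
Qed.

Lemma S_blockOp_seq_eq A B : seq_eq G Y A B -> S (blockOp A) -> S (blockOp B).
Proof. intros E HA. apply (S_ext _ _ HA). intros u. apply blockOp_seq_eq; auto. Qed.

Lemma S_blockOp_limit A : in_F G Y A ->
  (forall eps, eps > 0 -> exists B, in_F G Y B /\ S (blockOp B) /\ seq_dist_le G Y A B eps) ->
  S (blockOp A).
Proof.
  intros HA H. destruct hS as [_ [_ [_ [_ [_ Hlim]]]]].
  apply Hlim; [apply blockOp_bounded; auto|]. intros eps He.
  destruct (H eps He) as [B [HB [SB D]]]. exists (blockOp B). split; auto.
  apply blockOp_dist; auto using in_F_supp.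
Qed.

Lemma lifts_add A B : lifts A -> lifts B -> lifts (seq_add G A B).
Proof.
  intros [HA [SA [C [HC [AC SC]]]]] [HB [SB [D [HD [AD SD]]]]].
  split; [apply in_F_add; auto|split; [apply S_blockOp_add; auto|]].
  exists (seq_add G C D). split; [apply in_F_add; auto|split; [apply is_adj_add; auto|]].
  apply S_blockOp_add; auto.
Qed.

Lemma lifts_scale a A : lifts A -> lifts (seq_scale G a A).
Proof.
  intros [HA [SA [C [HC [AC SC]]]]].
  split; [apply in_F_scale; auto|split; [apply S_blockOp_scale; auto|]].
  exists (seq_scale G (Cconj a) C). split; [apply in_F_scale; auto|split; [apply is_adj_scale; auto|]].
  apply S_blockOp_scale; auto.
Qed.

Lemma lifts_comp A B : lifts A -> lifts B -> lifts (seq_comp G A B).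
Proof.
  intros [HA [SA [C [HC [AC SC]]]]] [HB [SB [D [HD [AD SD]]]]].
  split; [apply in_F_comp; auto|split; [apply S_blockOp_comp; auto using in_F_supp|]].
  exists (seq_comp G D C). split; [apply in_F_comp; auto|split].
  - apply is_adj_comp; auto using in_F_supp.
  - apply S_blockOp_comp; auto using in_F_supp.
Qed.

Lemma lifts_adj A A' : lifts A -> in_F G Y A' -> is_adj G Y A A' -> lifts A'.
Proof.
  intros [HA [SA [C [HC [AC SC]]]]] HA' AA'.
  assert (E : seq_eq G Y C A') by (apply (is_adj_unique G Y hY_nodup A); auto using in_F_supp).
  split; auto. split; [apply (S_blockOp_seq_eq C); auto|].
  exists A. split; auto. split; auto. apply is_adj_sym; auto.
Qed.

Lemma lifts_seq_eq A B : lifts A -> seq_eq G Y A B -> lifts B.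
Proof.
  intros [HA [SA [C [HC [AC SC]]]]] E.
  split; [apply (in_F_seq_eq G Y A); auto|split; [apply (S_blockOp_seq_eq A); auto|]].
  exists C. split; auto. split; auto. apply (is_adj_eq_l G Y A); auto.
Qed.

(* The adjoint of the limit is the limit of the adjoints. *)
Lemma lifts_limit A : in_F G Y A ->
  (forall eps, eps > 0 -> exists B, lifts B /\ seq_dist_le G Y A B eps) -> lifts A.
Proof.
  intros HA H. assert (AA : is_adj G Y A (seq_adj G Y A)) by auto using seq_adj_correct, in_F_linear.
  split; auto. split.
  - apply S_blockOp_limit; auto. intros eps He. destruct (H eps He) as [B [[HB [SB _]] D]]. eauto.
  - exists (seq_adj G Y A). split; [apply in_F_seq_adj; auto|split; auto].
    apply S_blockOp_limit; [apply in_F_seq_adj; auto|]. intros eps He.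
    destruct (H eps He) as [B [[HB [SB [C [HC [AC SC]]]]] D]]. exists C. split; auto. split; auto.
    apply (seq_dist_adj G Y A B); auto using seq_adj_supp, in_F_supp.
Qed.

Lemma lifts_cstar_subalg : cstar_subalg G Y lifts.
Proof.
  split; [intros A []; auto|]. split; [exact lifts_add|]. split; [exact lifts_scale|].
  split; [exact lifts_comp|]. split; [exact lifts_adj|]. split; [exact lifts_seq_eq|].
  exact lifts_limit.
Qed.

(* Op(P_Y (a L_r) P_Y) is again of the form b L_r; its adjoint is of the form b' L_{r^-1}. *)
Definition mul_shift_symbol (a : G -> Defs.C) (r : G) : G -> Defs.C := fun t =>
  match block_index t with
  | Some n => if excluded_middle_informative (In (r^-1 ** (t ** v n)) (Y n)) then a (t ** v n) else C0
  | None => C0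
  end.

Definition mul_shift_adj_symbol (a : G -> Defs.C) (r : G) : G -> Defs.C := fun t =>
  match block_index t with
  | Some n =>
      if excluded_middle_informative (In (r ** (t ** v n)) (Y n)) then Cconj (a (r ** (t ** v n)))
      else C0
  | None => C0
  end.

Definition compress_mul_shift_adj (a : G -> Defs.C) (r : G) : SeqOp G := fun n w t =>
  if excluded_middle_informative (In t (Y n)) then
    (if excluded_middle_informative (In (r ** t) (Y n)) then Cmul (Cconj (a (r ** t))) (w (r ** t)) else C0)
  else C0.

Lemma bounded_fun_mul_shift_symbol a r : bounded_fun G a -> bounded_fun G (mul_shift_symbol a r).
Proof.
  intros [M HM]. pose proof (bounded_fun_ge0 G a M HM).
  exists M. intros t. unfold mul_shift_symbol.
  destruct (block_index t); [destruct excluded_middle_informative|]; rewrite ?Cnorm2_C0; auto.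
Qed.

Lemma bounded_fun_mul_shift_adj_symbol a r : bounded_fun G a -> bounded_fun G (mul_shift_adj_symbol a r).
Proof.
  intros [M HM]. pose proof (bounded_fun_ge0 G a M HM).
  exists M. intros t. unfold mul_shift_adj_symbol.
  destruct (block_index t); [destruct excluded_middle_informative|]; rewrite ?Cnorm2_C0, ?Cnorm2_conj; auto.
Qed.

Lemma blockOp_compress_mul_shift a r u :
  blockOp (compress G Y (mul_shift G a r)) u = Mult G (mul_shift_symbol a r) (Lsh G r u).
Proof.
  vec_ext. rename x into t. unfold blockOp, compress, Mult, Lsh, mul_shift_symbol.
  destruct (block_index t) as [n|] eqn:E; [|Csolve].
  assert (Ht : In (t ** v n) (Y n)) by (apply (block_indexP G Y v hv); auto).
  rewrite Proj_in by auto. unfold mul_shift.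
  destruct (excluded_middle_informative (In (r^-1 ** (t ** v n)) (Y n))) as [H|H].
  - rewrite !Proj_in by auto. unfold Rsh. rewrite gmul_assoc, gmulK. reflexivity.
  - rewrite Proj_out by auto. Csolve.
Qed.

Lemma blockOp_compress_mul_shift_adj a r u :
  blockOp (compress_mul_shift_adj a r) u = Mult G (mul_shift_adj_symbol a r) (Lsh G (r^-1) u).
Proof.
  vec_ext. rename x into t. unfold blockOp, compress_mul_shift_adj, Mult, Lsh, mul_shift_adj_symbol.
  rewrite ginvK. destruct (block_index t) as [n|] eqn:E; [|Csolve].
  assert (Ht : In (t ** v n) (Y n)) by (apply (block_indexP G Y v hv); auto).
  destruct excluded_middle_informative as [_|Hn]; [|contradiction].
  destruct (excluded_middle_informative (In (r ** (t ** v n)) (Y n))) as [H|H].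
  - rewrite Proj_in by auto. unfold Rsh. rewrite gmul_assoc, gmulK. reflexivity.
  - Csolve.
Qed.

Lemma seq_adj_compress_mul_shift a r :
  seq_eq G Y (seq_adj G Y (compress G Y (mul_shift G a r))) (compress_mul_shift_adj a r).
Proof.
  intros n w Hw. vec_ext. rename x into t. unfold seq_adj, compress_mul_shift_adj.
  destruct (excluded_middle_informative (In t (Y n))) as [Ht|Ht]; [|reflexivity].
  assert (Z : forall s, In s (Y n) -> s <> r ** t -> compress G Y (mul_shift G a r) n (unit_vec t) s = C0).
  { intros s Hs Hne. unfold compress, mul_shift. rewrite Proj_in by auto.
    destruct (excluded_middle_informative (In (r^-1 ** s) (Y n))).
    - rewrite Proj_in by auto. unfold unit_vec. destruct excluded_middle_informative as [e|e]; [|Csolve].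
      exfalso; apply Hne. rewrite <- e. symmetry; apply gmulKVg.
    - rewrite Proj_out by auto. Csolve. }
  destruct (excluded_middle_informative (In (r ** t) (Y n))) as [Hr|Hr].
  - rewrite (inner_single _ _ (r ** t)); auto.
    unfold compress, mul_shift. rewrite Proj_in, gmulKg, Proj_in by auto.
    unfold unit_vec. destruct excluded_middle_informative as [_|e]; [|congruence].
    unfold Cone. destruct (a (r ** t)), (w (r ** t)). Csolve.
  - rewrite inner_eq0; [Csolve|]. intros s Hs. apply Z; auto. intros ->; contradiction.
Qed.

Lemma lifts_compress_mul_shift a r : bounded_fun G a -> lifts (compress G Y (mul_shift G a r)).
Proof.
  intros Ha. set (A := compress G Y (mul_shift G a r)).
  assert (HF : in_F G Y A) by (apply in_F_compress, mul_shift_bounded; auto).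
  assert (E : seq_eq G Y (seq_adj G Y A) (compress_mul_shift_adj a r)) by apply seq_adj_compress_mul_shift.
  split; auto. split.
  - apply (S_ext (fun u => Mult G (mul_shift_symbol a r) (Lsh G r u))).
    + apply S_comp; auto using bounded_fun_mul_shift_symbol.
    + intros u; symmetry; apply blockOp_compress_mul_shift.
  - exists (compress_mul_shift_adj a r). split; [|split].
    + apply (in_F_seq_eq G Y (seq_adj G Y A)); auto using in_F_seq_adj.
    + apply (is_adj_eq_r G Y _ (seq_adj G Y A)); auto using seq_adj_correct, in_F_linear.
    + apply (S_ext (fun u => Mult G (mul_shift_adj_symbol a r) (Lsh G (r^-1) u))).
      * apply S_comp; auto using bounded_fun_mul_shift_adj_symbol.
      * intros u; symmetry; apply blockOp_compress_mul_shift_adj.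
Qed.

Lemma lifts_compress_band (D : Op G) : band G D -> lifts (compress G Y D).
Proof.
  induction 1 as [a r Ha|D E _ IH1 _ IH2]; [apply lifts_compress_mul_shift; auto|].
  apply (lifts_seq_eq (seq_add G (compress G Y D) (compress G Y E))); [apply lifts_add; auto|].
  intros n u Hu. symmetry. apply compress_add, Hu.
Qed.

Lemma lifts_compress_BDO (B : Op G) : BDO G B -> lifts (compress G Y B).
Proof.
  intros HB. destruct (BDO_band_closure G B HB) as [Hb Happ].
  apply lifts_limit; [apply in_F_compress; auto|]. intros eps He.
  destruct (Happ eps He) as [D [HD Hd]].
  exists (compress G Y D). split; [apply lifts_compress_band; auto|apply compress_dist; auto].
Qed.

Lemma S_Y_BDO_lifts A : S_Y_BDO G Y A -> lifts A.
Proof. intros hA. apply hA; [exact lifts_cstar_subalg|exact lifts_compress_BDO]. Qed.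

End Lifting.

Lemma S_Y_BDO_in_F (G : Group) (Y : nat -> list G) (A : SeqOp G) :
  (forall n, NoDup (Y n)) -> S_Y_BDO G Y A -> in_F G Y A.
Proof.
  intros hY hA. apply hA; [apply in_F_cstar_subalg|]. intros B HB.
  apply in_F_compress; auto. apply (BDO_band_closure G B HB).
Qed.

Theorem mainTheorem5 (G : Group) (Y : nat -> list G) (v : nat -> G) (A : SeqOp G)
  (hY_nodup : forall n, NoDup (Y n))
  (hY_incr : forall n t, In t (Y n) -> In t (Y (S n)))
  (hY_union : forall t : G, exists n, In t (Y n))
  (hv : inflating G v Y)
  (hA : S_Y_BDO G Y A) :
  exists B : Op G, strong_sum G (Op_term G Y v A) B /\ BDO G B.
Proof.
  exists (blockOp G Y v A). split.
  - apply strong_sum_blockOp, S_Y_BDO_in_F; auto.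
  - intros S hS hL hM.
    destruct (S_Y_BDO_lifts G Y v hY_nodup hv S hS hL hM A hA) as [_ [HS _]]. exact HS.
Qed.
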